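(* Let $A,B,H,K$ be events with $H\ne\emptyset$, $K\ne\emptyset$. For each coherent prevision assessment $(x,y,z)$ on $\{A|H,B|K,(A|H)\wedge(B|K)\}$ there exists $\lambda\in[0,+\infty]$ such that, as random quantities, $(A|H)\wedge(B|K)=T_\lambda(A|H,B|K)$.
   Context: Events are identified with their indicators; $\bar E$ is the negation of $E$. For $H\ne\emptyset$ the conditional event $E|H$ is true if $EH$ is true, false if $\bar EH$ is true, void if $\bar H$ is true; with $P(E|H)=x$ it is identified with the random quantity $EH+x\bar H$, and a conditional random quantity $X|H$ with prevision $\mu$ with $XH+\mu\bar H$. Coherence (de Finetti): an assessment $(\mu_1,\dots,\mu_m)$ on $\{X_1|H_1,\dots,X_m|H_m\}$ is coherent iff for all real stakes $s_i$ the gain $G=\sum_is_iH_i(X_i-\mu_i)$, restricted to $H_1\vee\dots\vee H_m$, satisfies $\min G\le0\le\max G$. Conjunction of two conditional events: given $P(A|H)=x$, $P(B|K)=y$ and $z=\mathbb P[(AHBK+x\bar HBK+y\bar KAH)|(H\vee K)]$, the conjunction is $(A|H)\wedge(B|K)=AHBK+x\bar HBK+y\bar KAH+z\bar H\bar K$, i.e. it equals $1$ if $AHBK$ is true, $0$ if $\bar AH\vee\bar BK$ is true, $x$ if $\bar HBK$ is true, $y$ if $AH\bar K$ is true, $z$ if $\bar H\bar K$ is true; its prevision is $z$. Frank t-norms $T_\lambda:[0,1]^2\to[0,1]$, $\lambda\in[0,+\infty]$: $T_0(x,y)=\min\{x,y\}$, $T_1(x,y)=xy$, $T_{+\infty}(x,y)=\max\{x+y-1,0\}$,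 and $T_\lambda(x,y)=\log_\lambda\big(1+\frac{(\lambda^x-1)(\lambda^y-1)}{\lambda-1}\big)$ otherwise. $T_\lambda(A|H,B|K)$ denotes the random quantity obtained by applying $T_\lambda$ pointwise to the values of $A|H$ and $B|K$. *)

From Stdlib Require Import Reals.
From Coquelicot Require Import Rbar.
Open Scope R_scope.

Definition ind (b : bool) : R := if b then 1 else 0.

(* The conditional event E|H with P(E|H) = x, as the random quantity
   EH + x (not H). Events are boolean predicates on a sample space Omega. *)
Definition cond_ev {Omega : Type} (E H : Omega -> bool) (x : R) (w : Omega) : R :=
  ind (andb (H w) (E w)) + x * ind (negb (H w)).

Definition conj_num {Omega : Type} (A H B K : Omega -> bool) (x y : R)
  (w : Omega) : R :=
  ind (andb (andb (andb (A w) (H w)) (B w)) (K w))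
  + x * ind (andb (andb (negb (H w)) (B w)) (K w))
  + y * ind (andb (andb (negb (K w)) (A w)) (H w)).

(* The conjunction (A|H) /\ (B|K) = AHBK + x~HBK + y~KAH + z~H~K,
   where z is the prevision of conj_num | (H \/ K). *)
Definition conj_ce {Omega : Type} (A H B K : Omega -> bool) (x y z : R)
  (w : Omega) : R :=
  conj_num A H B K x y w + z * ind (andb (negb (H w)) (negb (K w))).

(* De Finetti gain for the assessment (x,y,z) on
   {A|H, B|K, (conj_num)|(H \/ K)} with stakes s1 s2 s3. *)
Definition gain {Omega : Type} (A H B K : Omega -> bool) (x y z s1 s2 s3 : R)
  (w : Omega) : R :=
  s1 * ind (H w) * (ind (A w) - x)
  + s2 * ind (K w) * (ind (B w) - y)
  + s3 * ind (orb (H w) (K w)) * (conj_num A H B K x y w - z).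

(* Coherence: for all stakes, the gain restricted to H \/ K has
   min <= 0 <= max (G takes finitely many values, so min/max are attained). *)
Definition coherent3 {Omega : Type} (A H B K : Omega -> bool) (x y z : R) : Prop :=
  forall s1 s2 s3 : R,
    (exists w, orb (H w) (K w) = true /\ gain A H B K x y z s1 s2 s3 w <= 0) /\
    (exists w, orb (H w) (K w) = true /\ 0 <= gain A H B K x y z s1 s2 s3 w).

Definition frank (l : Rbar) (x y : R) : R :=
  match l with
  | p_infty => Rmax (x + y - 1) 0
  | m_infty => 0 (* not used: lambda is required to be >= 0 *)
  | Finite l =>
      if Req_EM_T l 0 then Rmin x y
      else if Req_EM_T l 1 then x * y
      else ln (1 + (Rpower l x - 1) * (Rpower l y - 1) / (l - 1)) / ln l
  end.

(* On each world the pair (A|H, B|K) takes values in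
   {0,1,x} x {0,1,y}, and the conjunction equals 1, 0, x, y or z there.
   Hence the conjunction is T(A|H, B|K) for any binary operation T which
   has 1 as neutral and 0 as absorbing element on the relevant values and
   satisfies T(x,y) = z (lemma conj_ce_as_tnorm).  Every Frank t-norm has
   these boundary properties, so it remains to find lambda in [0,+oo] with
   T_lambda(x,y) = z:
   - if z = xy, take lambda = 1 (product);
   - otherwise coherence forces x, y in [0,1] (coherent_x_unit) and the
     Frechet bounds max(x+y-1,0) <= z <= min(x,y) (coherent_frechet);
     at the two bounds take lambda = +oo (Lukasiewicz) or lambda = 0 (min);
   - strictly between the bounds, writing lambda = e^t, the equation
     T_lambda(x,y) = z becomes frank_eqn x y z t = 0.  This continuous
     function has the sign of xy - z near t = 0 (on the side of t matching
     that sign) and the opposite sign for |t| large, so the intermediate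
     value theorem yields a root t <> 0 (frank_eqn_root). *)

From Stdlib Require Import Reals Lra Psatz.
From Coquelicot Require Import Rbar.
Open Scope R_scope.

Lemma ind_bounds (b : bool) : 0 <= ind b <= 1.
Proof. destruct b; simpl; lra. Qed.

Lemma cond_ev_value {Omega : Type} (E H : Omega -> bool) (x : R) (w : Omega) :
  cond_ev E H x w = if H w then ind (E w) else x.
Proof. unfold cond_ev, ind; destruct (H w), (E w); simpl; ring. Qed.

Lemma conj_ce_value {Omega : Type} (A H B K : Omega -> bool) (x y z : R) (w : Omega) :
  conj_ce A H B K x y z w =
  if H w then (if K w then ind (A w && B w) else y * ind (A w))
  else (if K w then x * ind (B w) else z).
Proof. unfold conj_ce, conj_num, ind; destruct (H w), (K w), (A w), (B w); simpl; ring. Qed.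

Definition tnorm_boundary (D : R -> Prop) (f : R -> R -> R) : Prop :=
  forall a, D a -> f a 1 = a /\ f 1 a = a /\ f a 0 = 0 /\ f 0 a = 0.

Lemma conj_ce_as_tnorm {Omega : Type} (A H B K : Omega -> bool) (x y z : R)
    (D : R -> Prop) (f : R -> R -> R) :
  tnorm_boundary D f -> D 0 -> D 1 -> D x -> D y -> f x y = z ->
  forall w, conj_ce A H B K x y z w = f (cond_ev A H x w) (cond_ev B K y w).
Proof.
  intros Hf D0 D1 Dx Dy Hxy w.
  destruct (Hf 0 D0) as [f01 [_ [f00 _]]].
  destruct (Hf 1 D1) as [f11 [_ [f10 _]]].
  destruct (Hf x Dx) as [fx1 [_ [fx0 _]]].
  destruct (Hf y Dy) as [_ [f1y [_ f0y]]].
  rewrite conj_ce_value, !cond_ev_value.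
  destruct (H w), (K w), (A w), (B w); simpl; rewrite ?Rmult_1_r, ?Rmult_0_r; auto.
Qed.

(* The gain depends on a world only through the truth values of H, K, A, B. *)
Definition gain_at (x y z s1 s2 s3 : R) (h k a b : bool) : R :=
  gain (fun _ : unit => a) (fun _ => h) (fun _ => b) (fun _ => k) x y z s1 s2 s3 tt.

Lemma gain_gain_at {Omega : Type} (A H B K : Omega -> bool) x y z s1 s2 s3 w :
  gain A H B K x y z s1 s2 s3 w = gain_at x y z s1 s2 s3 (H w) (K w) (A w) (B w).
Proof. reflexivity. Qed.

Definition bmax (f : bool -> R) : R := Rmax (f true) (f false).

Lemma bmax_ge (f : bool -> R) (b : bool) : f b <= bmax f.
Proof. destruct b; [apply Rmax_l | apply Rmax_r]. Qed.

Lemma gain_bounded {Omega : Type} (A H B K : Omega -> bool) x y z s1 s2 s3 :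
  exists C, forall w, gain A H B K x y z s1 s2 s3 w <= C.
Proof.
  exists (bmax (fun h => bmax (fun k => bmax (fun a => bmax (fun b =>
            gain_at x y z s1 s2 s3 h k a b))))).
  intro w; rewrite gain_gain_at.
  eapply Rle_trans; [| apply (bmax_ge _ (H w))].
  eapply Rle_trans; [| apply (bmax_ge _ (K w))].
  eapply Rle_trans; [| apply (bmax_ge _ (A w))].
  apply (bmax_ge _ (B w)).
Qed.
Lemma coherent_no_sure_loss {Omega : Type} (A H B K : Omega -> bool) x y z s1 s2 s3 :
  coherent3 A H B K x y z ->
  ~ (forall w, (H w || K w)%bool = true -> gain A H B K x y z s1 s2 s3 w < 0).
Proof.
  intros C G. destruct (C s1 s2 s3) as [_ [w [Hw Hg]]].
  specialize (G w Hw). lra.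
Qed.

Lemma gain_split_first {Omega : Type} (A H B K : Omega -> bool) x y z s1 s2 s3 w :
  gain A H B K x y z s1 s2 s3 w
  = gain A H B K x y z 0 s2 s3 w + s1 * ind (H w) * (ind (A w) - x).
Proof. unfold gain; ring. Qed.

(* If stakes on B|K and on the conjunction already make every world of
   ~H /\ K a loss, a large stake on A|H of the right sign turns every
   world into a loss unless x lies in [0,1]. *)
Lemma coherent_prevision_unit {Omega : Type} (A H B K : Omega -> bool) x y z s2 s3 :
  coherent3 A H B K x y z ->
  (forall w, H w = false -> K w = true -> gain A H B K x y z 0 s2 s3 w < 0) ->
  0 <= x <= 1.
Proof.
  intros C Loss. destruct (gain_bounded A H B K x y z 0 s2 s3) as [c Hc].
  assert (Drive : forall s1, (forall a : bool, s1 * (ind a - x) <= -(Rabs c + 1)) ->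
                  False).
  { intros s1 Hs1. apply (coherent_no_sure_loss A H B K x y z s1 s2 s3 C).
    intros w Hw. rewrite gain_split_first.
    specialize (Hc w). pose proof (Rle_abs c).
    destruct (H w) eqn:HHw; simpl in Hw |- *.
    - specialize (Hs1 (A w)). lra.
    - specialize (Loss w HHw Hw). lra. }
  split; apply Rnot_lt_le; intro Hx; pose proof (Rabs_pos c).
  - apply (Drive (- ((Rabs c + 1) / (- x)))). intro a.
    assert (Hm : (Rabs c + 1) / (- x) * (- x) = Rabs c + 1) by (field; lra).
    assert (0 < (Rabs c + 1) / (- x)) by (apply Rdiv_lt_0_compat; lra).
    pose proof (ind_bounds a). nra.
  - apply (Drive ((Rabs c + 1) / (x - 1))). intro a.
    assert (Hm : (Rabs c + 1) / (x - 1) * (x - 1) = Rabs c + 1) by (field; lra).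
    assert (0 < (Rabs c + 1) / (x - 1)) by (apply Rdiv_lt_0_compat; lra).
    pose proof (ind_bounds a). nra.
Qed.

(* When z <> xy, the stakes x/(xy-z) and -1/(xy-z) make every world of
   ~H /\ K lose exactly 1; hence x lies in [0,1]. *)
Lemma coherent_x_unit {Omega : Type} (A H B K : Omega -> bool) x y z :
  coherent3 A H B K x y z -> z <> x * y -> 0 <= x <= 1.
Proof.
  intros C Hz. apply (coherent_prevision_unit A H B K x y z (x / (x*y - z)) (-1 / (x*y - z)) C).
  intros w HHw HKw.
  assert (HD : x * y - z <> 0) by lra.
  unfold gain, conj_num, ind; rewrite HHw, HKw.
  destruct (A w), (B w); simpl;
  match goal with |- ?g < 0 => replace g with (-1) by (field; exact HD) end; lra.
Qed.

Lemma gain_swap {Omega : Type} (A H B K : Omega -> bool) x y z s1 s2 s3 w :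
  gain A H B K x y z s1 s2 s3 w = gain B K A H y x z s2 s1 s3 w.
Proof. unfold gain, conj_num, ind; destruct (H w), (K w), (A w), (B w); simpl; ring. Qed.

Lemma coherent_swap {Omega : Type} (A H B K : Omega -> bool) x y z :
  coherent3 A H B K x y z -> coherent3 B K A H y x z.
Proof.
  intros C s1 s2 s3. destruct (C s2 s1 s3) as [[w1 [h1 g1]] [w2 [h2 g2]]].
  split; [exists w1 | exists w2]; rewrite <- gain_swap, Bool.orb_comm; auto.
Qed.

Lemma coherent_y_unit {Omega : Type} (A H B K : Omega -> bool) x y z :
  coherent3 A H B K x y z -> z <> x * y -> 0 <= y <= 1.
Proof.
  intros C Hz. apply (coherent_x_unit B K A H y x z (coherent_swap A H B K x y z C)).
  rewrite Rmult_comm; exact Hz.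
Qed.

Ltac sure_loss_by_cases H K A B :=
  intros w Hw; unfold gain, conj_num, ind;
  destruct (H w), (K w), (A w), (B w); simpl in Hw |- *; try discriminate Hw.

Lemma coherent_frechet {Omega : Type} (A H B K : Omega -> bool) x y z :
  coherent3 A H B K x y z -> 0 <= x <= 1 -> 0 <= y <= 1 ->
  Rmax (x + y - 1) 0 <= z <= Rmin x y.
Proof.
  intros C Hx Hy.
  assert (Hzx : z <= x).
  { apply Rnot_lt_le; intro Hc; apply (coherent_no_sure_loss A H B K x y z (-1) 0 1 C).
    sure_loss_by_cases H K A B; lra. }
  assert (Hzy : z <= y).
  { apply Rnot_lt_le; intro Hc; apply (coherent_no_sure_loss A H B K x y z 0 (-1) 1 C).
    sure_loss_by_cases H K A B; lra. }
  assert (Hz0 : 0 <= z).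
  { apply Rnot_lt_le; intro Hc; apply (coherent_no_sure_loss A H B K x y z 0 0 (-1) C).
    sure_loss_by_cases H K A B; nra. }
  assert (Hzl : x + y - 1 <= z).
  { apply Rnot_lt_le; intro Hc; apply (coherent_no_sure_loss A H B K x y z 1 1 (-1) C).
    sure_loss_by_cases H K A B; nra. }
  split; [apply Rmax_lub | apply Rmin_glb]; assumption.
Qed.
(* For t <> 0, T_{e^t}(x,y) = z iff frank_eqn x y z t = 0. *)
Definition frank_eqn (x y z t : R) : R :=
  (exp (t * z) - 1) * (exp t - 1) - (exp (t * x) - 1) * (exp (t * y) - 1).

Lemma frank_eqn_continuous (x y z : R) : continuity (frank_eqn x y z).
Proof. unfold frank_eqn; reg. Qed.

Lemma expm1_bounds (u : R) : u <= exp u - 1 <= u * exp u.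
Proof.
  pose proof (exp_ineq1_le u). pose proof (exp_ineq1_le (- u)).
  pose proof (exp_pos u).
  assert (exp (- u) * exp u = 1) by (rewrite <- exp_plus, Rplus_opp_l; apply exp_0).
  split; nra.
Qed.

Lemma exp_le_quarter (u : R) : u <= -3 -> exp u <= 1 / 4.
Proof.
  intro Hu. pose proof (exp_ineq1_le (- u)). pose proof (exp_pos u).
  assert (exp u * exp (- u) = 1) by (rewrite <- exp_plus, Rplus_opp_r; apply exp_0).
  nra.
Qed.

Lemma exp_le_mono (u v : R) : u <= v -> exp u <= exp v.
Proof. intros [Huv | ->]; [left; apply exp_increasing |]; lra. Qed.

(* The choice t = ln(xy/z)/4 used near t = 0: z e^(4t) = xy. *)
Lemma exp_quarter_log (x y z : R) : 0 < x * y -> 0 < z ->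
  z * exp (4 * (ln (x * y / z) / 4)) = x * y.
Proof.
  intros Hxy Hz. replace (4 * (ln (x * y / z) / 4)) with (ln (x * y / z)) by field.
  rewrite exp_ln by (apply Rdiv_lt_0_compat; lra). field; lra.
Qed.

Lemma ln_sign (a : R) : 0 < a -> (1 < a -> 0 < ln a) /\ (a < 1 -> ln a < 0).
Proof.
  intro Ha; rewrite <- ln_1; split; intro Hlt; apply ln_increasing; lra.
Qed.

(* If z < xy then frank_eqn is negative at some t > 0: for t > 0,
   frank_eqn <= t^2 (z e^(2t) - xy). *)
Lemma frank_eqn_neg_near_zero (x y z : R) :
  0 <= x -> 0 <= y -> 0 < z <= 1 -> z < x * y ->
  exists t, 0 < t /\ frank_eqn x y z t < 0.
Proof.
  intros Hx Hy Hz Hlt. set (t := ln (x * y / z) / 4).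
  assert (Ht : 0 < t).
  { assert (1 < x * y / z) by (apply (Rmult_lt_reg_r z); [lra|]; field_simplify; lra).
    pose proof (ln_sign (x * y / z) ltac:(lra)). unfold t; lra. }
  pose proof (exp_quarter_log x y z ltac:(lra) ltac:(lra)) as E4; fold t in E4.
  exists t; split; [exact Ht|]; unfold frank_eqn.
  pose proof (expm1_bounds (t * z)); pose proof (expm1_bounds t).
  pose proof (expm1_bounds (t * x)); pose proof (expm1_bounds (t * y)).
  pose proof (exp_pos (t * z)); pose proof (exp_pos t).
  assert (Hsum : exp (t * z) * exp t <= exp (2 * t)).
  { rewrite <- exp_plus; apply exp_le_mono; nra. }
  assert (H24 : exp (2 * t) < exp (4 * t)) by (apply exp_increasing; lra).
  assert (Up : (exp (t * z) - 1) * (exp t - 1) <= t * t * z * exp (2 * t)).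
  { apply Rle_trans with ((t * z * exp (t * z)) * (t * exp t)); [apply Rmult_le_compat; nra|].
    replace ((t * z * exp (t * z)) * (t * exp t)) with ((t * t * z) * (exp (t * z) * exp t))
      by ring.
    apply Rmult_le_compat_l; [nra | exact Hsum]. }
  assert (Low : t * t * (x * y) <= (exp (t * x) - 1) * (exp (t * y) - 1)).
  { replace (t * t * (x * y)) with ((t * x) * (t * y)) by ring.
    apply Rmult_le_compat; nra. }
  assert (Gap : t * t * z * exp (2 * t) < t * t * (x * y)).
  { rewrite <- E4. replace (t * t * (z * exp (4 * t))) with ((t * t * z) * exp (4 * t)) by ring.
    apply Rmult_lt_compat_l; [apply Rmult_lt_0_compat; [nra | lra] | exact H24]. }
  lra.
Qed.

(* If xy < z then frank_eqn is positive at some t < 0: for t < 0,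
   frank_eqn >= t^2 (z e^(2t) - xy). *)
Lemma frank_eqn_pos_near_zero (x y z : R) :
  0 < x -> 0 < y -> z <= 1 -> x * y < z ->
  exists t, t < 0 /\ 0 < frank_eqn x y z t.
Proof.
  intros Hx Hy Hz Hlt. assert (Hxy : 0 < x * y) by nra.
  set (t := ln (x * y / z) / 4).
  assert (Ht : t < 0).
  { assert (0 < x * y / z) by (apply Rdiv_lt_0_compat; lra).
    assert (x * y / z < 1) by (apply (Rmult_lt_reg_r z); [lra|]; field_simplify; lra).
    pose proof (ln_sign (x * y / z) ltac:(lra)). unfold t; lra. }
  pose proof (exp_quarter_log x y z Hxy ltac:(lra)) as E4; fold t in E4.
  exists t; split; [exact Ht|]; unfold frank_eqn.
  pose proof (expm1_bounds (t * z)); pose proof (expm1_bounds t).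
  pose proof (expm1_bounds (t * x)); pose proof (expm1_bounds (t * y)).
  pose proof (exp_pos (t * z)); pose proof (exp_pos t).
  assert (Hsum : exp (2 * t) <= exp (t * z) * exp t).
  { rewrite <- exp_plus; apply exp_le_mono; nra. }
  assert (H24 : exp (4 * t) < exp (2 * t)) by (apply exp_increasing; lra).
  assert (Low : t * t * z * exp (2 * t) <= (exp (t * z) - 1) * (exp t - 1)).
  { apply Rle_trans with ((- (t * z * exp (t * z))) * (- (t * exp t))).
    { replace ((- (t * z * exp (t * z))) * (- (t * exp t)))
        with ((t * t * z) * (exp (t * z) * exp t)) by ring.
      apply Rmult_le_compat_l; [nra | exact Hsum]. }
    replace ((exp (t * z) - 1) * (exp t - 1)) with ((1 - exp (t * z)) * (1 - exp t)) by ring.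
    assert (t * z <= 0) by nra.
    apply Rmult_le_compat; nra. }
  assert (Up : (exp (t * x) - 1) * (exp (t * y) - 1) <= t * t * (x * y)).
  { replace ((exp (t * x) - 1) * (exp (t * y) - 1))
      with ((1 - exp (t * x)) * (1 - exp (t * y))) by ring.
    replace (t * t * (x * y)) with ((- (t * x)) * (- (t * y))) by ring.
    assert (t * x <= 0) by nra. assert (t * y <= 0) by nra.
    pose proof (exp_pos (t * x)); pose proof (exp_pos (t * y)).
    apply Rmult_le_compat; nra. }
  assert (Gap : t * t * (x * y) < t * t * z * exp (2 * t)).
  { rewrite <- E4. replace (t * t * (z * exp (4 * t))) with ((t * t * z) * exp (4 * t)) by ring.
    apply Rmult_lt_compat_l; [apply Rmult_lt_0_compat; [nra | lra] | exact H24]. }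
  lra.
Qed.

Lemma frank_eqn_expand (x y z t : R) :
  frank_eqn x y z t = exp (t * z) * exp t - exp (t * z) - exp t
                      - exp (t * x) * exp (t * y) + exp (t * x) + exp (t * y).
Proof. unfold frank_eqn; ring. Qed.

(* As t -> +oo the term e^(t(1+z)) dominates when z > max(0, x+y-1). *)
Lemma frank_eqn_pos_far (x y z : R) :
  0 < z -> x + y - 1 < z -> exists T, forall t, T <= t -> 0 < frank_eqn x y z t.
Proof.
  intros Hz Hl.
  pose proof (Rmin_l 1 (Rmin z (1 + z - x - y))).
  pose proof (Rmin_l z (1 + z - x - y)); pose proof (Rmin_r z (1 + z - x - y)).
  pose proof (Rmin_r 1 (Rmin z (1 + z - x - y))).
  set (m := Rmin 1 (Rmin z (1 + z - x - y))) in *.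
  assert (Hm : 0 < m) by (apply Rmin_glb_lt; [lra | apply Rmin_glb_lt; lra]).
  exists (3 / m); intros t Ht.
  assert (Htm : 3 <= t * m).
  { apply (Rmult_le_compat_r m) in Ht; [|lra].
    replace (3 / m * m) with 3 in Ht by (field; lra). exact Ht. }
  assert (Ht0 : 0 < t) by nra.
  set (P := exp (t * z) * exp t).
  assert (HP : 0 < P) by (unfold P; pose proof (exp_pos (t * z)); pose proof (exp_pos t); nra).
  assert (E1 : exp (t * z) = P * exp (- t)).
  { unfold P; rewrite Rmult_assoc, <- exp_plus, Rplus_opp_r, exp_0; ring. }
  assert (E2 : exp t = P * exp (- (t * z))).
  { unfold P; rewrite (Rmult_comm (exp (t * z))), Rmult_assoc, <- exp_plus,
      Rplus_opp_r, exp_0; ring. }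
  assert (E3 : exp (t * x) * exp (t * y) = P * exp (- (t * (1 + z - x - y)))).
  { unfold P; rewrite <- !exp_plus; f_equal; ring. }
  assert (Q1 : exp (- t) <= 1 / 4) by (apply exp_le_quarter; nra).
  assert (Q2 : exp (- (t * z)) <= 1 / 4) by (apply exp_le_quarter; nra).
  assert (Q3 : exp (- (t * (1 + z - x - y))) <= 1 / 4) by (apply exp_le_quarter; nra).
  rewrite frank_eqn_expand; fold P; rewrite E3.
  rewrite E1 at 1; rewrite E2 at 1.
  pose proof (exp_pos (t * x)); pose proof (exp_pos (t * y)).
  nra.
Qed.

(* As t -> -oo the term -e^(tz) dominates when z < min(x, y). *)
Lemma frank_eqn_neg_far (x y z : R) :
  z < x -> z < y -> exists T, forall t, t <= T -> frank_eqn x y z t < 0.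
Proof.
  intros Hx Hy.
  pose proof (Rmin_l 1 (Rmin (x - z) (y - z))).
  pose proof (Rmin_l (x - z) (y - z)); pose proof (Rmin_r (x - z) (y - z)).
  pose proof (Rmin_r 1 (Rmin (x - z) (y - z))).
  set (m := Rmin 1 (Rmin (x - z) (y - z))) in *.
  assert (Hm : 0 < m) by (apply Rmin_glb_lt; [lra | apply Rmin_glb_lt; lra]).
  exists (- (3 / m)); intros t Ht.
  assert (Htm : t * m <= -3).
  { apply (Rmult_le_compat_r m) in Ht; [|lra].
    replace (- (3 / m) * m) with (-3) in Ht by (field; lra). exact Ht. }
  assert (Ht0 : t < 0) by nra.
  set (Q := exp (t * z)).
  assert (HQ : 0 < Q) by apply exp_pos.
  assert (E1 : exp (t * x) = Q * exp (t * (x - z))) by (unfold Q; rewrite <- exp_plus; f_equal; ring).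
  assert (E2 : exp (t * y) = Q * exp (t * (y - z))) by (unfold Q; rewrite <- exp_plus; f_equal; ring).
  assert (Q1 : exp t <= 1 / 4) by (apply exp_le_quarter; nra).
  assert (Q2 : exp (t * (x - z)) <= 1 / 4) by (apply exp_le_quarter; nra).
  assert (Q3 : exp (t * (y - z)) <= 1 / 4) by (apply exp_le_quarter; nra).
  rewrite frank_eqn_expand; fold Q; rewrite E1, E2.
  pose proof (exp_pos t); pose proof (exp_pos (t * (x - z))); pose proof (exp_pos (t * (y - z))).
  assert (Q * exp t <= Q * (1 / 4)) by (apply Rmult_le_compat_l; lra).
  assert (Q * exp (t * (x - z)) <= Q * (1 / 4)) by (apply Rmult_le_compat_l; lra).
  assert (Q * exp (t * (y - z)) <= Q * (1 / 4)) by (apply Rmult_le_compat_l; lra).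
  assert (0 < Q * exp (t * (x - z)) * (Q * exp (t * (y - z)))) by
    (repeat apply Rmult_lt_0_compat; assumption).
  lra.
Qed.

(* Strictly inside the Frechet bounds and off the product, frank_eqn has
   a nonzero root: the signs near 0 and far away differ on one side. *)
Lemma frank_eqn_root (x y z : R) :
  0 < z -> x + y - 1 < z -> z < x -> z < y -> z <> x * y ->
  exists t, t <> 0 /\ frank_eqn x y z t = 0.
Proof.
  intros Hz Hl Hx Hy Hne.
  destruct (Rlt_or_le z (x * y)) as [Hlt | Hle].
  - destruct (frank_eqn_neg_near_zero x y z ltac:(lra) ltac:(lra) ltac:(lra) Hlt)
      as [t0 [Ht0 Hneg]].
    destruct (frank_eqn_pos_far x y z Hz Hl) as [T Hpos].
    pose proof (Hpos (Rmax T t0) (Rmax_l T t0)) as Hpos1.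
    destruct (IVT_cor (frank_eqn x y z) t0 (Rmax T t0) (frank_eqn_continuous x y z)
                (Rmax_r T t0) ltac:(nra)) as [t [Ht Hroot]].
    exists t; split; [lra | exact Hroot].
  - assert (Hgt : x * y < z) by lra.
    destruct (frank_eqn_pos_near_zero x y z ltac:(lra) ltac:(lra) ltac:(lra) Hgt)
      as [t0 [Ht0 Hpos]].
    destruct (frank_eqn_neg_far x y z Hx Hy) as [T Hneg].
    pose proof (Hneg (Rmin T t0) (Rmin_l T t0)) as Hneg1.
    destruct (IVT_cor (frank_eqn x y z) (Rmin T t0) t0 (frank_eqn_continuous x y z)
                (Rmin_r T t0) ltac:(nra)) as [t [Ht Hroot]].
    exists t; split; [lra | exact Hroot].
Qed.

(* e^t <> 1 for t <> 0, so the Frank parameter e^t is neither 0 nor 1. *)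
Lemma exp_minus_one_neq0 (t : R) : t <> 0 -> exp t - 1 <> 0.
Proof.
  intros Ht E. apply Ht. rewrite <- (ln_exp t). replace (exp t) with 1 by lra. apply ln_1.
Qed.

Lemma frank_exp (t a b : R) : t <> 0 ->
  frank (Finite (exp t)) a b = ln (1 + (exp (t * a) - 1) * (exp (t * b) - 1) / (exp t - 1)) / t.
Proof.
  intros Ht. pose proof (exp_minus_one_neq0 t Ht). unfold frank.
  destruct (Req_EM_T (exp t) 0) as [E|_]; [pose proof (exp_pos t); lra|].
  destruct (Req_EM_T (exp t) 1) as [E|_]; [lra|].
  unfold Rpower; rewrite ln_exp, (Rmult_comm a t), (Rmult_comm b t). reflexivity.
Qed.

Lemma frank_exp_solves (x y z t : R) : t <> 0 -> frank_eqn x y z t = 0 ->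
  frank (Finite (exp t)) x y = z.
Proof.
  intros Ht Hroot. pose proof (exp_minus_one_neq0 t Ht). unfold frank_eqn in Hroot.
  rewrite frank_exp by exact Ht.
  replace (1 + (exp (t * x) - 1) * (exp (t * y) - 1) / (exp t - 1)) with (exp (t * z)).
  - rewrite ln_exp. field; exact Ht.
  - apply (Rmult_eq_reg_r (exp t - 1)); [|assumption]. field_simplify; [lra | assumption].
Qed.

Lemma frank_exp_boundary (t : R) : t <> 0 ->
  tnorm_boundary (fun _ => True) (frank (Finite (exp t))).
Proof.
  intros Ht a _.
  repeat split; apply frank_exp_solves; try exact Ht;
    unfold frank_eqn; rewrite ?Rmult_0_r, ?Rmult_1_r, ?exp_0; ring.
Qed.

Lemma frank_product (a b : R) : frank (Finite 1) a b = a * b.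
Proof.
  unfold frank. destruct (Req_EM_T 1 0); [lra|]. destruct (Req_EM_T 1 1); [reflexivity | lra].
Qed.

Lemma frank_product_boundary : tnorm_boundary (fun _ => True) (frank (Finite 1)).
Proof. intros a _; rewrite !frank_product; repeat split; ring. Qed.

Definition unit_interval (a : R) : Prop := 0 <= a <= 1.

Lemma frank_minimum (a b : R) : frank (Finite 0) a b = Rmin a b.
Proof. unfold frank. destruct (Req_EM_T 0 0); [reflexivity | lra]. Qed.

Lemma frank_minimum_boundary : tnorm_boundary unit_interval (frank (Finite 0)).
Proof.
  intros a Ha; unfold unit_interval in Ha; rewrite !frank_minimum.
  repeat split; [apply Rmin_left | apply Rmin_right | apply Rmin_right | apply Rmin_left]; lra.
Qed.

Lemma frank_lukasiewicz_boundary : tnorm_boundary unit_interval (frank p_infty).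
Proof.
  intros a Ha; unfold unit_interval in Ha; simpl.
  repeat split; unfold Rmax; destruct Rle_dec; lra.
Qed.

Theorem theorem15 (Omega : Type) (A B H K : Omega -> bool)
  (HH : exists w, H w = true) (HK : exists w, K w = true)
  (x y z : R) (Hcoh : coherent3 A H B K x y z) :
  exists l : Rbar, Rbar_le (Finite 0) l /\
    forall w : Omega,
      conj_ce A H B K x y z w = frank l (cond_ev A H x w) (cond_ev B K y w).
Proof.
  destruct (Req_dec z (x * y)) as [Hprod | Hprod].
  { exists (Finite 1); split; [simpl; lra|].
    apply (conj_ce_as_tnorm A H B K x y z _ _ frank_product_boundary); auto.
    rewrite frank_product; auto. }
  pose proof (coherent_x_unit A H B K x y z Hcoh Hprod) as Hx.
  pose proof (coherent_y_unit A H B K x y z Hcoh Hprod) as Hy.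
  assert (D01 : unit_interval 0 /\ unit_interval 1) by (unfold unit_interval; lra).
  destruct (coherent_frechet A H B K x y z Hcoh Hx Hy) as [Hlow Hup].
  destruct (Req_dec z (Rmin x y)) as [Hmin | Hmin].
  { exists (Finite 0); split; [simpl; lra|].
    apply (conj_ce_as_tnorm A H B K x y z _ _ frank_minimum_boundary);
      [apply D01 | apply D01 | exact Hx | exact Hy | rewrite frank_minimum; auto]. }
  destruct (Req_dec z (Rmax (x + y - 1) 0)) as [Hluk | Hluk].
  { exists p_infty; split; [simpl; exact I|].
    apply (conj_ce_as_tnorm A H B K x y z _ _ frank_lukasiewicz_boundary);
      [apply D01 | apply D01 | exact Hx | exact Hy | simpl; auto]. }
  assert (Hin : 0 < z /\ x + y - 1 < z /\ z < x /\ z < y).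
  { unfold Rmin, Rmax in *; destruct (Rle_dec x y), (Rle_dec (x + y - 1) 0); lra. }
  destruct Hin as [Hz0 [Hzl [Hzx Hzy]]].
  destruct (frank_eqn_root x y z Hz0 Hzl Hzx Hzy Hprod) as [t [Ht Hroot]].
  exists (Finite (exp t)); split; [simpl; left; apply exp_pos|].
  apply (conj_ce_as_tnorm A H B K x y z _ _ (frank_exp_boundary t Ht)); auto.
  apply frank_exp_solves; assumption.
Qed.
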